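(* Let $X$ be a Banach space satisfying at least one of the following: (a) $n(X)=1$; (b) $n(X)>0$ and $X$ has the approximation property; (c) $X$ is finite dimensional. Then $X$ has the BPBop-nu if and only if $X$ is one-dimensional.
   Context: Let $X$ be a Banach space over $\mathbb{K}\in\{\mathbb{R},\mathbb{C}\}$, $\mathcal{L}(X)$ the bounded linear operators on $X$ with operator norm. $\Pi(X)=\{(x,x^* )\in S_X\times S_{X^*}: x^*(x)=1\}$; $v(T)=\sup\{|x^*(Tx)|:(x,x^* )\in\Pi(X)\}$; $n(X)=\inf\{v(T): T\in\mathcal{L}(X),\ \|T\|=1\}$. $X$ has the BPBop-nu if for every $\varepsilon>0$ there is $\eta(\varepsilon)>0$ such that whenever $T\in\mathcal{L}(X)$ with $v(T)=1$ and $(x,x^* )\in\Pi(X)$ satisfy $|x^*(Tx)|>1-\eta(\varepsilon)$, there is $(y,y^* )\in\Pi(X)$ with $|y^*(Ty)|=1$, $\|y-x\|<\varepsilon$ and $\|y^*-x^*\|<\varepsilon$. *)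

From mathcomp Require Import all_boot all_order all_algebra.
From mathcomp Require Import all_classical all_reals all_analysis.
From mathcomp Require Import complex.
Set Implicit Arguments. Unset Strict Implicit. Unset Printing Implicit Defensive.
Import Order.TTheory GRing.Theory Num.Theory.
Import numFieldNormedType.Exports.
Local Open Scope classical_set_scope.
Local Open Scope ring_scope.

Section BanachDefs.
Variable K : numFieldType.

Definition is_sup (A : set K) (s : K) : Prop :=
  (forall a, A a -> a <= s) /\ (forall c, (forall a, A a -> a <= c) -> s <= c).
Definition is_inf (A : set K) (s : K) : Prop :=
  (forall a, A a -> s <= a) /\ (forall c, (forall a, A a -> c <= a) -> c <= s).

Variable X : normedModType K.

Definition is_linear_op (T : X -> X) : Prop :=
  forall (a : K) (x y : X), T (a *: x + y) = a *: T x + T y.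
Definition bounded_op (T : X -> X) : Prop := is_linear_op T /\ continuous T.

Definition is_linear_fun (f : X -> K) : Prop :=
  forall (a : K) (x y : X), f (a *: x + y) = a * f x + f y.
Definition dual_elt (f : X -> K) : Prop := is_linear_fun f /\ continuous f.

Definition op_norm (T : X -> X) (c : K) : Prop :=
  is_sup [set `|T x| | x in [set x : X | `|x| <= 1]] c.
Definition dual_norm (f : X -> K) (c : K) : Prop :=
  is_sup [set `|f x| | x in [set x : X | `|x| <= 1]] c.

Definition Pi (x : X) (f : X -> K) : Prop :=
  `|x| = 1 /\ dual_elt f /\ dual_norm f 1 /\ f x = 1.

Definition num_radius (T : X -> X) (s : K) : Prop :=
  is_sup [set a | exists x f, Pi x f /\ a = `|f (T x)| ] s.

Definition num_index (s : K) : Prop :=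
  is_inf [set a | exists T, bounded_op T /\ op_norm T 1 /\ num_radius T a] s.

Definition BPBop_nu : Prop :=
  forall eps : K, 0 < eps -> exists eta : K, 0 < eta /\
    forall T : X -> X, bounded_op T -> num_radius T 1 ->
    forall (x : X) (f : X -> K), Pi x f -> 1 - eta < `|f (T x)| ->
    exists (y : X) (g : X -> K), Pi y g /\ `|g (T y)| = 1 /\
      `|y - x| < eps /\
      exists c, dual_norm (fun z => g z - f z) c /\ c < eps.

Definition in_span (s : seq X) (y : X) : Prop :=
  exists c : 'I_(size s) -> K, y = \sum_(i < size s) c i *: s`_i.

Definition finite_dim : Prop :=
  exists s : seq X, forall y : X, in_span s y.

Definition one_dim : Prop :=
  exists e : X, e != 0 /\ forall y : X, exists a : K, y = a *: e.

Definition finite_rank (T : X -> X) : Prop :=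
  exists s : seq X, forall x : X, in_span s (T x).

Definition approx_prop : Prop :=
  forall (C : set X) (eps : K), compact C -> 0 < eps ->
    exists T : X -> X, bounded_op T /\ finite_rank T /\
      forall x, C x -> `|T x - x| < eps.

End BanachDefs.

Definition theorem2p4_stmt (K : numFieldType) (X : completeNormedModType K)
  : Prop :=
  (exists x : X, x != 0) ->
  (num_index X 1
   \/ ((exists s : K, num_index X s /\ 0 < s) /\ approx_prop X)
   \/ finite_dim X) ->
  (BPBop_nu X <-> one_dim X).

From mathcomp Require Import all_boot all_order all_algebra.
From mathcomp Require Import all_classical all_reals all_analysis.
From mathcomp Require Import complex.
From mathcomp Require Import ring.
Set Implicit Arguments. Unset Strict Implicit. Unset Printing Implicit Defensive.
Import Order.TTheory GRing.Theory Num.Theory.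
Import numFieldNormedType.Exports.
Local Open Scope ring_scope.
Local Open Scope classical_set_scope.

(* One-dimensional spaces trivially have the property.  Conversely, in
   dimension at least two, take a state [(x0, f0)] and a unit vector [z] in
   the kernel of [f0].  The key obstruction [BPBop_nu_annihilates] says that
   then [phi y * g z = 0] for every norm-one functional [phi] and every state
   [(y, g)]: otherwise the operator [(1 - e) Id + e lam phi (.) z], rescaled
   to numerical radius one, almost attains its radius at [(x0, f0)] but at no
   state [(y', g')] with [g'] close to [f0].  Consequently
   - if [n(X) > 0], the norm-one operator [f0 (.) z] has numerical radius zero, a
     contradiction [num_index_pos_one_dim];
   - in finite dimension, choosing [phi = g] for a state [(z, g)] gives
     [1 = 0] [norming_one_dim].  Norming functionals exist by a
     finite-dimensional Hahn-Banach theorem, proved by flattening the norm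
     one direction at a time, plus complexification for complex scalars. *)

Lemma lipschitz_continuous (K : numFieldType) (V W : normedModType K)
    (F : V -> W) (L : K) :
  0 < L -> (forall u w, `|F u - F w| <= L * `|u - w|) -> continuous F.
Proof.
move=> L0 HL x; apply/cvgrPdist_lt => e e0.
apply/nbhs_normP; exists (e / L); first by rewrite /= divr_gt0.
move=> y /= hy; apply: (le_lt_trans (HL _ _)).
by rewrite -ltr_pdivlMl // mulrC.
Qed.

(* Only nonempty sets of scalars have a supremum or an infimum: for the empty
   set every scalar would be a bound. *)
Lemma is_sup_nonempty (K : numFieldType) (A : set K) s :
  is_sup A s -> exists a, A a.
Proof.
move=> [_ lub]; apply: contrapT => A0.
have : s <= s - 1 by apply: lub => a Aa; case: A0; exists a.
by rewrite lerDl oppr_ge0 ler10.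
Qed.

Lemma is_inf_nonempty (K : numFieldType) (A : set K) s :
  is_inf A s -> exists a, A a.
Proof.
move=> [_ glb]; apply: contrapT => A0.
have : s + 1 <= s by apply: glb => a Aa; case: A0; exists a.
by rewrite gerDl ler10.
Qed.

Lemma unit_rotation (K : numFieldType) (w : K) : w != 0 ->
  exists lam : K, `|lam| = 1 /\ lam * w = `|w|.
Proof.
move=> w0; exists (`|w| / w); split; last by rewrite mulfVK.
by rewrite normrM normfV normr_id mulfV // normr_eq0.
Qed.

Lemma small_weight (K : numFieldType) (eta : K) : 0 < eta ->
  exists e : K, [/\ 0 < e, e < 1 & e < eta].
Proof.
move=> eta0; have eta2 : 0 < eta + 2 by rewrite addr_gt0.
exists (eta / (eta + 2)); split; first by rewrite divr_gt0.
  by rewrite ltr_pdivrMr // mul1r ltrDl.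
rewrite ltr_pdivrMr // ltr_pMr // (@lt_le_trans _ _ 2) ?ltr1n //.
by rewrite lerDr ltW.
Qed.

(* The completeness property of the scalar field that the argument needs:
   every nonempty subset of [0, 1] has a least upper bound. *)
Definition unit_sup_property (K : numFieldType) : Prop :=
  forall S : set K, (exists a, S a) -> (forall a, S a -> 0 <= a <= 1) ->
  exists s, is_sup S s.

Section LinearMaps.
Variables (K : numFieldType) (X : normedModType K).

Lemma linf0 (f : X -> K) : is_linear_fun f -> f 0 = 0.
Proof.
move=> lf; have := lf 1 0 0; rewrite scale1r addr0 mul1r => /eqP.
by rewrite -subr_eq subrr eq_sym => /eqP.
Qed.

Lemma linfZ (f : X -> K) : is_linear_fun f -> forall a x, f (a *: x) = a * f x.
Proof. by move=> lf a x; have := lf a x 0; rewrite addr0 linf0 // addr0. Qed.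

Lemma linfD (f : X -> K) : is_linear_fun f -> forall x y, f (x + y) = f x + f y.
Proof. by move=> lf x y; have := lf 1 x y; rewrite scale1r mul1r. Qed.

Lemma linfB (f : X -> K) : is_linear_fun f -> forall x y, f (x - y) = f x - f y.
Proof.
move=> lf x y; have := lf (-1) y x; rewrite scaleN1r mulN1r addrC => ->.
by rewrite addrC.
Qed.

Lemma lino0 (T : X -> X) : is_linear_op T -> T 0 = 0.
Proof.
move=> lT; have := lT 1 0 0; rewrite !scale1r addr0 => /eqP.
by rewrite -subr_eq subrr eq_sym => /eqP.
Qed.

Lemma linoZ (T : X -> X) : is_linear_op T -> forall a x, T (a *: x) = a *: T x.
Proof. by move=> lT a x; have := lT a x 0; rewrite addr0 lino0 // addr0. Qed.

Lemma linoB (T : X -> X) : is_linear_op T -> forall x y, T (x - y) = T x - T y.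
Proof.
move=> lT x y; have := lT (-1) y x; rewrite !scaleN1r addrC => ->.
by rewrite addrC.
Qed.

Lemma bounded_op_of_bound (T : X -> X) (L : K) : is_linear_op T -> 0 < L ->
  (forall u, `|T u| <= L * `|u|) -> bounded_op T.
Proof.
move=> lT L0 bT; split => //; apply: (lipschitz_continuous L0) => u w.
by rewrite -linoB.
Qed.

Lemma dual_elt_of_bound (f : X -> K) : is_linear_fun f ->
  (forall u, `|f u| <= `|u|) -> dual_elt f.
Proof.
move=> lf bf; split => //; apply: (@lipschitz_continuous _ _ _ _ 1 ltr01).
by move=> u w; rewrite mul1r -linfB.
Qed.

Lemma dual_norm_bound (h : X -> K) c :
  (forall a x, h (a *: x) = a * h x) -> dual_norm h c ->
  forall u, `|h u| <= c * `|u|.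
Proof.
move=> hZ [ub _] u; have [->|u0] := eqVneq u 0.
  by have := hZ 0 0; rewrite scale0r mul0r => ->; rewrite !normr0 mulr0.
have nu0 : 0 < `|u| by rewrite normr_gt0.
have nu' : `| `|u|^-1 *: u| = 1.
  by rewrite normrZ normfV normr_id mulVf // gt_eqF.
have hu : h u = `|u| * h (`|u|^-1 *: u).
  by rewrite hZ mulrA mulfV ?gt_eqF // mul1r.
have : `|h (`|u|^-1 *: u)| <= c.
  by apply: ub; exists (`|u|^-1 *: u); rewrite //= nu'.
by rewrite hu normrM normr_id mulrC; apply: ler_wpM2r; apply: ltW.
Qed.

Lemma Pi_norm (x : X) (f : X -> K) : Pi x f -> `|x| = 1.
Proof. by case. Qed.

Lemma Pi_linear (x : X) (f : X -> K) : Pi x f -> is_linear_fun f.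
Proof. by case=> _ [[]]. Qed.

Lemma Pi_eval (x : X) (f : X -> K) : Pi x f -> f x = 1.
Proof. by case=> _ [_ []]. Qed.

Lemma Pi_bound (x : X) (f : X -> K) : Pi x f -> forall u, `|f u| <= `|u|.
Proof.
move=> [_ [[lf _] [dn _]]] u.
by have := dual_norm_bound (linfZ lf) dn u; rewrite mul1r.
Qed.

Lemma Pi_valueZ (x : X) (f : X -> K) (c : K) (u : X) : Pi x f ->
  `|f (c *: u)| = `|c| * `|f u|.
Proof. by move=> Pxf; rewrite (linfZ (Pi_linear Pxf)) normrM. Qed.

Lemma kernel_value_le (f g : X -> K) (z : X) c :
  is_linear_fun f -> is_linear_fun g -> f z = 0 -> `|z| = 1 ->
  dual_norm (fun u => g u - f u) c -> `|g z| <= c.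
Proof.
move=> lf lg fz nz dn.
have hZ a x : g (a *: x) - f (a *: x) = a * (g x - f x).
  by rewrite (linfZ lg) (linfZ lf) mulrBr.
by have := dual_norm_bound hZ dn z; rewrite fz subr0 nz mulr1.
Qed.

Lemma Pi_of_norming (g : X -> K) (z : X) : is_linear_fun g ->
  (forall x, `|g x| <= `|x|) -> `|z| = 1 -> g z = 1 -> Pi z g.
Proof.
move=> lg bg nz gz; split => //; split; first exact: dual_elt_of_bound.
split => //; split.
  by move=> b [x /= nx <-]; apply: le_trans (bg x) nx.
by move=> c; apply; exists z; rewrite /= ?nz ?gz ?normr1.
Qed.

End LinearMaps.

Section Perturbation.
Variables (K : numFieldType) (X : normedModType K).
Variables (phi : X -> K) (z : X) (e lam : K).
Hypotheses (lphi : is_linear_fun phi) (bphi : forall u, `|phi u| <= `|u|).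
Hypotheses (nz : `|z| = 1) (e0 : 0 < e) (e1 : e < 1) (nlam : `|lam| = 1).

Definition perturb (y : X) : X := (1 - e) *: y + (e * lam * phi y) *: z.

Lemma perturb_linear : is_linear_op perturb.
Proof.
move=> a x y; rewrite /perturb lphi (scalerDr (1 - e)) mulrDr (scalerDl z).
by rewrite scalerDr !scalerA addrACA (mulrC (1 - e)) (mulrCA (e * lam)).
Qed.

Lemma perturb_contraction u : `|perturb u| <= `|u|.
Proof.
rewrite /perturb; apply: (le_trans (ler_normD _ _)).
have e1p : 0 <= 1 - e by rewrite subr_ge0 ltW.
rewrite !normrZ nz mulr1 nlam mulr1 (ger0_norm e1p) (ger0_norm (ltW e0)).
apply: (@le_trans _ _ ((1 - e) * `|u| + e * `|u|)).
  by rewrite lerD2l (ler_wpM2l (ltW e0)).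
by rewrite -mulrDl subrK mul1r.
Qed.

Lemma perturb_bounded : bounded_op perturb.
Proof.
apply: (bounded_op_of_bound perturb_linear ltr01) => u.
by rewrite mul1r perturb_contraction.
Qed.

Lemma perturb_value (y : X) (g : X -> K) : Pi y g ->
  g (perturb y) = (1 - e) + e * (lam * phi y * g z).
Proof.
move=> Pyg; have lg := Pi_linear Pyg.
by rewrite /perturb (linfD lg) !(linfZ lg) (Pi_eval Pyg) mulr1 !mulrA.
Qed.

Lemma perturb_value_le (y : X) (g : X -> K) : Pi y g ->
  `|g (perturb y)| <= (1 - e) + e * `|g z|.
Proof.
move=> Pyg; rewrite perturb_value //; apply: (le_trans (ler_normD _ _)).
have e1p : 0 <= 1 - e by rewrite subr_ge0 ltW.
rewrite (ger0_norm e1p) lerD2l normrM (ger0_norm (ltW e0)).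
rewrite (ler_wpM2l (ltW e0)) // !normrM nlam mul1r ler_piMl //.
by rewrite -(Pi_norm Pyg) bphi.
Qed.

Lemma perturb_value_lt (y : X) (g : X -> K) c : Pi y g -> `|g z| < c ->
  `|g (perturb y)| < (1 - e) + e * c.
Proof.
move=> Pyg gzc; apply: le_lt_trans (perturb_value_le Pyg) _.
by rewrite ltrD2l ltr_pM2l.
Qed.

Lemma perturb_value_kernel (x : X) (f : X -> K) : Pi x f -> f z = 0 ->
  f (perturb x) = 1 - e.
Proof. by move=> Pxf fz; rewrite perturb_value // fz !mulr0 addr0. Qed.

Lemma perturb_value_le1 (y : X) (g : X -> K) : Pi y g -> `|g (perturb y)| <= 1.
Proof.
move=> Pyg; apply: (le_trans (perturb_value_le Pyg)).
rewrite -[leRHS](subrK e) lerD2l -[leRHS]mulr1 (ler_wpM2l (ltW e0)) //.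
by rewrite -nz (Pi_bound Pyg).
Qed.

End Perturbation.

Section NumericalRadius.
Variables (K : numFieldType) (X : normedModType K).

Lemma num_radius_exists (T : X -> X) : unit_sup_property K ->
  (exists (x : X) (f : X -> K), Pi x f) ->
  (forall (x : X) (f : X -> K), Pi x f -> `|f (T x)| <= 1) ->
  exists v, num_radius T v.
Proof.
move=> Hs [x [f Pxf]] bT; apply: Hs; first by exists `|f (T x)|, x, f.
by move=> a [y [g [Pyg ->]]]; rewrite normr_ge0 (bT _ _ Pyg).
Qed.

Lemma normalize_radius (T : X -> X) v : bounded_op T -> num_radius T v ->
  0 < v -> bounded_op (fun y => v^-1 *: T y) /\
           num_radius (fun y => v^-1 *: T y) 1.
Proof.
move=> [lT cT] [ub lub] v0.
have val y g : Pi y g -> `|g (v^-1 *: T y)| = v^-1 * `|g (T y)|.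
  by move=> Pyg; rewrite (Pi_valueZ _ _ Pyg) ger0_norm // invr_ge0 ltW.
split; first split.
- by move=> a x y; rewrite lT scalerDr !scalerA mulrC.
- by move=> x; apply: (cvg_comp _ _ (cT x)); exact: scaler_continuous.
split.
  move=> a [x [f [Pxf ->]]]; rewrite val // ler_pdivrMl // mulr1.
  by apply: ub; exists x, f.
move=> b ubb; rewrite -(ler_pM2l v0) mulr1; apply: lub => a [x [f [Pxf ->]]].
by rewrite -ler_pdivrMl // -val //; apply: ubb; exists x, f.
Qed.

End NumericalRadius.

Section BPBopNu.
Variables (K : numFieldType) (X : normedModType K).
Hypothesis Hsup : unit_sup_property K.

(* If some state [(y, g)] and norm-one functional [phi] had
   [phi y g z <> 0], the perturbation [T0 = (1 - e) Id + e lam phi (.) z]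
   (rescaled to numerical radius one) would almost attain its radius at
   [(x0, f0)], while every state [(y', g')] with [g'] close to [f0] has
   [|g' z|] small, hence [|g'(T0 y')|] strictly below the radius: the
   BPBop-nu fails. *)
Lemma BPBop_nu_annihilates (x0 : X) (f0 : X -> K) (z : X) (phi : X -> K) :
  BPBop_nu X -> Pi x0 f0 -> `|z| = 1 -> f0 z = 0 -> is_linear_fun phi ->
  (forall u, `|phi u| <= `|u|) ->
  forall (y1 : X) (g1 : X -> K), Pi y1 g1 -> phi y1 * g1 z = 0.
Proof.
move=> HB Px0 nz f0z lphi bphi y1 g1 Py1; apply/eqP/negP => /negP w0.
set w := phi y1 * g1 z in w0.
have nw0 : 0 < `|w| by rewrite normr_gt0.
have d0 : 0 < `|w| / 2 by rewrite divr_gt0.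
have [eta [eta0 HBeta]] := HB _ d0.
have [e [e0 e1 e_eta]] := small_weight eta0.
have [lam [nlam lamw]] := unit_rotation w0.
pose T0 := perturb phi z e lam.
have T0_le1 y g : Pi y g -> `|g (T0 y)| <= 1.
  by move=> Pyg; rewrite /T0; apply: perturb_value_le1.
have [v [ubv lubv]] : exists v, num_radius T0 v.
  by apply: (num_radius_exists Hsup _ T0_le1); exists x0, f0.
have e1p : 0 <= 1 - e by rewrite subr_ge0 ltW.
have w_val : 0 < (1 - e) + e * `|w|.
  by rewrite ltr_wpDr ?subr_gt0 // mulr_ge0 // ltW.
have v_ge : (1 - e) + e * `|w| <= v.
  apply: ubv; exists y1, g1; split => //.
  by rewrite perturb_value // -mulrA lamw (ger0_norm (ltW w_val)).
have v0 : 0 < v := lt_le_trans w_val v_ge.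
have v1 : v <= 1 by apply: lubv => _ [x [f [Pxf ->]]]; apply: T0_le1.
have [bT nT] := normalize_radius (perturb_bounded lphi bphi nz e0 e1 nlam)
                 (conj ubv lubv) v0.
have nearly : 1 - eta < `|f0 (v^-1 *: T0 x0)|.
  rewrite (Pi_valueZ _ _ Px0) perturb_value_kernel // (ger0_norm e1p).
  apply: (@lt_le_trans _ _ (1 - e)); first by rewrite ltrD2l ltrN2.
  by rewrite normfV (gtr0_norm v0) ler_peMl // invf_ge1.
have [y [g [Pyg [attain [_ [c [dn cd]]]]]]] := HBeta _ bT nT x0 f0 Px0 nearly.
have gz : `|g z| < `|w|.
  have := kernel_value_le (Pi_linear Px0) (Pi_linear Pyg) f0z nz dn.
  move=> /le_lt_trans; apply.
  by apply: lt_trans cd _; rewrite ltr_pdivrMr // ltr_pMr // ltr1n.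
have : `|g (T0 y)| = v.
  move: attain; rewrite (Pi_valueZ _ _ Pyg) normfV (gtr0_norm v0).
  by move=> /(congr1 ( *%R v)); rewrite mulrA mulfV ?gt_eqF // mul1r mulr1.
have : `|g (T0 y)| < (1 - e) + e * `|w| by rewrite /T0; apply: perturb_value_lt.
by move=> /lt_le_trans /(_ v_ge) /[swap] ->; rewrite ltxx.
Qed.

(* One-dimensional spaces have the BPBop-nu trivially: every operator is a
   scalar multiple of the identity, so its numerical radius is attained at
   every state, in particular at the given one. *)
Lemma one_dim_BPBop_nu : one_dim X -> BPBop_nu X.
Proof.
move=> [e [e0 He]] eps eps0; exists 1; split => // T [lT _] nT x f Pxf _.
have [mu Tmu] := He (T e).
have Tm y : T y = mu *: y.
  by have [a ->] := He y; rewrite (linoZ lT) Tmu !scalerA mulrC.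
have val y g : Pi y g -> `|g (T y)| = `|mu|.
  by move=> Pyg; rewrite Tm (linfZ (Pi_linear Pyg)) (Pi_eval Pyg) mulr1.
have mu1 : `|mu| = 1.
  case: nT => ub lub; apply/eqP; rewrite eq_le; apply/andP; split.
    by apply: ub; exists x, f; rewrite val.
  by apply: lub => a [y [g [Pyg ->]]]; rewrite val.
exists x, f; split => //; split; first by rewrite val.
split; first by rewrite subrr normr0.
exists 0; split => //; split.
  by move=> a [y _ <-]; rewrite subrr normr0.
by move=> c; apply; exists 0; rewrite /= ?normr0 ?ler01 // subrr normr0.
Qed.

Lemma kernel_unit_vector (x0 : X) (f0 : X -> K) : ~ one_dim X ->
  x0 != 0 -> is_linear_fun f0 -> f0 x0 = 1 -> exists z, `|z| = 1 /\ f0 z = 0.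
Proof.
move=> nOD x00 lf fx0.
have [w Hw] : exists w, forall a, w != a *: x0.
  apply: contrapT => H; apply: nOD; exists x0; split => // y.
  apply: contrapT => Hy; apply: H; exists y => a; apply/eqP => E.
  by apply: Hy; exists a.
pose z' := w - f0 w *: x0.
have nz' : 0 < `|z'| by rewrite normr_gt0 subr_eq0 Hw.
exists (`|z'|^-1 *: z'); split.
  by rewrite normrZ normfV normr_id mulVf // gt_eqF.
by rewrite (linfZ lf) (linfB lf) (linfZ lf) fx0 mulr1 subrr mulr0.
Qed.

(* Under the BPBop-nu, in dimension at least two, there is a norm-one
   rank-one operator [y |-> f0 y z] whose numerical radius is zero; hence a
   positive numerical index rules out the BPBop-nu. *)
Lemma num_index_pos_one_dim (s : K) : BPBop_nu X -> num_index X s -> 0 < s ->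
  one_dim X.
Proof.
move=> HB hs s0; apply: contrapT => nOD.
have [r [T [_ [_ nT]]]] := is_inf_nonempty hs; case: hs => lb _.
have [t [x0 [f0 [Px0 _]]]] := is_sup_nonempty nT.
have x00 := Pi_norm Px0; have lf0 := Pi_linear Px0; have fx0 := Pi_eval Px0.
have [z [nz f0z]] : exists z, `|z| = 1 /\ f0 z = 0.
  by apply: kernel_unit_vector lf0 fx0 => //; rewrite -normr_gt0 x00.
pose P y := f0 y *: z.
have bP u : `|P u| <= `|u| by rewrite normrZ nz mulr1 (Pi_bound Px0).
have lP : is_linear_op P by move=> a x y; rewrite /P lf0 scalerDl scalerA.
have val y g : Pi y g -> g (P y) = 0.
  move=> Pyg; rewrite (linfZ (Pi_linear Pyg)).
  exact: (BPBop_nu_annihilates HB Px0 nz f0z lf0 (Pi_bound Px0) Pyg).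
have : s <= 0.
  apply: lb; exists P; split.
    by apply: (bounded_op_of_bound lP ltr01) => u; rewrite mul1r bP.
  split; split.
  - by move=> b [y /= ny <-]; apply: le_trans (bP y) ny.
  - move=> c; apply; exists x0; first by rewrite /= x00.
    by rewrite /P normrZ nz fx0 normr1 mulr1.
  - by move=> a [y [g [Pyg ->]]]; rewrite val ?normr0.
  - by move=> c; apply; exists x0, f0; rewrite val ?normr0.
by move=> /(lt_le_trans s0); rewrite ltxx.
Qed.

(* If every unit vector is normed by some functional (as in finite
   dimension), a nonzero space with the BPBop-nu is one-dimensional: for a
   unit vector [z] in the kernel of a state functional and a state [(z, g)],
   the obstruction would give [g z * g z = 0], whereas [g z = 1]. *)
Lemma norming_one_dim :
  (forall z : X, `|z| = 1 -> exists g, Pi z g) ->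
  BPBop_nu X -> (exists x : X, x != 0) -> one_dim X.
Proof.
move=> HN HB [x x0]; apply: contrapT => nOD.
have nx : 0 < `|x| by rewrite normr_gt0.
have [f0 Px0] : exists f0, Pi (`|x|^-1 *: x) f0.
  by apply: HN; rewrite normrZ normfV normr_id mulVf // gt_eqF.
have [z [nz f0z]] : exists z, `|z| = 1 /\ f0 z = 0.
  apply: kernel_unit_vector (Pi_linear Px0) (Pi_eval Px0) => //.
  by rewrite -normr_gt0 (Pi_norm Px0).
have [g Pz] := HN _ nz.
have := BPBop_nu_annihilates HB Px0 nz f0z (Pi_linear Pz) (Pi_bound Pz) Pz.
by rewrite (Pi_eval Pz) mulr1 => /eqP; rewrite oner_eq0.
Qed.

Lemma BPBop_nu_iff_one_dim
  (HN : finite_dim X -> forall z : X, `|z| = 1 -> exists g, Pi z g) :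
  (exists x : X, x != 0) ->
  (num_index X 1
   \/ ((exists s : K, num_index X s /\ 0 < s) /\ approx_prop X)
   \/ finite_dim X) ->
  (BPBop_nu X <-> one_dim X).
Proof.
move=> hx hcase; split => [HB|]; last exact: one_dim_BPBop_nu.
case: hcase => [h1|[[[s [hs s0]] _]|hfd]].
- exact: num_index_pos_one_dim HB h1 ltr01.
- exact: num_index_pos_one_dim HB hs s0.
- exact: norming_one_dim (HN hfd) HB hx.
Qed.

End BPBopNu.

(* The real scalar action [sc] is a parameter, so that the
   result also applies to complex spaces with their scalars restricted to the
   reals.  The proof is the classical one-direction-at-a-time construction:
   [flatten q v] is the largest sublinear minorant of [q] that is linear
   along [v], and flattening successively along the spanning vectors and the
   prescribed point yields the desired linear functional. *)
Section FiniteHahnBanach.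
Variables (R : realType) (V : zmodType) (sc : R -> V -> V).
Hypothesis scDr : forall a x y, sc a (x + y) = sc a x + sc a y.
Hypothesis scDl : forall a b x, sc (a + b) x = sc a x + sc b x.
Hypothesis scA : forall a b x, sc a (sc b x) = sc (a * b) x.
Hypothesis sc1 : forall x, sc 1 x = x.

Lemma sc0l x : sc 0 x = 0.
Proof.
have := scDl 0 0 x; rewrite addr0 => /eqP.
by rewrite -subr_eq subrr eq_sym => /eqP.
Qed.

Lemma scNl a x : sc (- a) x = - sc a x.
Proof. by apply/eqP; rewrite -addr_eq0 -scDl addNr sc0l. Qed.

Lemma sc0r a : sc a 0 = 0.
Proof. by rewrite -(sc0l 0) scA mulr0. Qed.

Lemma scNr a x : sc a (- x) = - sc a x.
Proof. by apply/eqP; rewrite -addr_eq0 -scDr addNr sc0r. Qed.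

Lemma sc_sum a (c : R * V -> R) (r : seq (R * V)) :
  sc a (\sum_(pr <- r) sc (c pr) pr.2) = \sum_(pr <- r) sc (a * c pr) pr.2.
Proof.
elim: r => [|pr r IH]; first by rewrite !big_nil sc0r.
by rewrite !big_cons scDr IH scA.
Qed.

Definition sublinear (q : V -> R) : Prop :=
  (forall x y, q (x + y) <= q x + q y) /\
  (forall r x, 0 <= r -> q (sc r x) <= r * q x).

Definition linear_along (q : V -> R) (u : V) : Prop :=
  forall x a, q (x + sc a u) = q x + a * q u.

Section Sublinear.
Variable q : V -> R.
Hypothesis hq : sublinear q.

Lemma sublinear0 : q 0 = 0.
Proof.
case: hq => qD qZ; apply/eqP; rewrite eq_le; apply/andP; split.
  by have := qZ 0 0 (lexx _); rewrite sc0l mul0r.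
by have := qD 0 0; rewrite addr0 lerDr.
Qed.

Lemma sublinearZ r x : 0 <= r -> q (sc r x) = r * q x.
Proof.
case: hq => _ qZ r0; apply/eqP; rewrite eq_le qZ //=.
have [->|rn0] := eqVneq r 0; first by rewrite sc0l mul0r sublinear0.
have rp : 0 < r by rewrite lt_neqAle eq_sym rn0.
have ir : 0 <= r^-1 by rewrite invr_ge0 ltW.
by have := qZ r^-1 (sc r x) ir; rewrite scA mulVf // sc1 ler_pdivlMl.
Qed.

Lemma linear_along_of_odd u : q (- u) = - q u -> linear_along q u.
Proof.
have pos w : q (- w) = - q w -> forall x a, 0 <= a ->
    q (x + sc a w) = q x + a * q w.
  move=> hw x a a0; apply/eqP; rewrite eq_le; apply/andP; split.
    by apply: le_trans ((proj1 hq) _ _) _; rewrite (sublinearZ _ a0).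
  have := (proj1 hq) (x + sc a w) (sc a (- w)).
  by rewrite (sublinearZ _ a0) hw mulrN scNr addrK -lerBrDr.
move=> hu x a; have [a0|a0] := leP 0 a; first exact: pos.
have -> : sc a u = sc (- a) (- u) by rewrite scNr scNl opprK.
rewrite pos ?opprK ?hu ?mulrNN //; last by rewrite oppr_ge0 ltW.
by rewrite opprK.
Qed.

End Sublinear.

Definition flatten (q : V -> R) (v : V) (x : V) : R :=
  inf [set q (x + sc t v) - t * q v | t in [set t : R | 0 <= t]].

Section Flatten.
Variables (q : V -> R) (v : V).
Hypothesis hq : sublinear q.

Lemma flatten_lbound x :
  lbound [set q (x + sc t v) - t * q v | t in [set t : R | 0 <= t]]
         (- q (- x)).
Proof.
move=> _ [t /= t0 <-]; rewrite lerBrDr.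
have := (proj1 hq) (x + sc t v) (- x).
by rewrite addrAC subrr add0r (sublinearZ hq) // => H; rewrite addrC lerBlDr.
Qed.

Lemma flatten_le x t : 0 <= t -> flatten q v x <= q (x + sc t v) - t * q v.
Proof.
move=> t0; apply: ge_inf; last by exists t.
by exists (- q (- x)); apply: flatten_lbound.
Qed.

Lemma le_flatten x m :
  (forall t, 0 <= t -> m <= q (x + sc t v) - t * q v) -> m <= flatten q v x.
Proof.
move=> H; apply: lb_le_inf.
  by exists (q (x + sc 0 v) - 0 * q v); exists 0 => /=.
by move=> _ [t /= t0 <-]; apply: H.
Qed.

Lemma flatten_le_self x : flatten q v x <= q x.
Proof. by have := flatten_le x (lexx 0); rewrite sc0l addr0 mul0r subr0. Qed.

Lemma flatten0 : flatten q v 0 = 0.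
Proof.
apply/eqP; rewrite eq_le; apply/andP; split.
  by have := flatten_le_self 0; rewrite (sublinear0 hq).
have : - q (- 0) <= flatten q v 0.
  by apply: le_flatten => t t0; apply: flatten_lbound; exists t.
by rewrite oppr0 (sublinear0 hq) oppr0.
Qed.

Lemma flatten_sublinear : sublinear (flatten q v).
Proof.
split=> [x y|r x r0].
  rewrite -lerBlDr; apply: le_flatten => t t0.
  rewrite lerBlDr -lerBlDl; apply: le_flatten => s s0.
  rewrite lerBlDl; apply: le_trans (flatten_le (x + y) (addr_ge0 t0 s0)) _.
  rewrite scDl (addrACA x y) mulrDl [leRHS]addrACA -opprD lerD2r.
  exact: (proj1 hq).
have [->|rn0] := eqVneq r 0; first by rewrite sc0l mul0r flatten0.
have rp : 0 < r by rewrite lt_neqAle eq_sym rn0.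
rewrite -ler_pdivrMl //; apply: le_flatten => t t0; rewrite ler_pdivrMl //.
apply: le_trans (flatten_le _ (mulr_ge0 r0 t0)) _.
by rewrite -scA -scDr (sublinearZ hq) // mulrBr mulrA.
Qed.

Lemma flatten_negv : flatten q v (- v) <= - q v.
Proof.
have := flatten_le (- v) ler01.
by rewrite sc1 addNr (sublinear0 hq) mul1r sub0r.
Qed.

Lemma flatten_sum_v : 0 <= flatten q v v + flatten q v (- v).
Proof.
by have := (proj1 flatten_sublinear) v (- v); rewrite subrr flatten0.
Qed.

Lemma flatten_self : flatten q v v = q v.
Proof.
apply/eqP; rewrite eq_le flatten_le_self /=.
rewrite -(lerD2r (flatten q v (- v))); apply: le_trans flatten_sum_v.
by rewrite -[leRHS](subrr (q v)) lerD2l flatten_negv.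
Qed.

Lemma flatten_linear_along : linear_along (flatten q v) v.
Proof.
apply: (linear_along_of_odd flatten_sublinear).
apply/eqP; rewrite eq_le flatten_self flatten_negv /= lerNl.
by rewrite -subr_ge0 opprK -{1}flatten_self flatten_sum_v.
Qed.

Lemma flatten_shift u : linear_along q u ->
  forall x a, flatten q v (x + sc a u) = flatten q v x + a * q u.
Proof.
move=> hu x a; apply/eqP; rewrite eq_le; apply/andP; split.
  rewrite -lerBlDr; apply: le_flatten => t t0; rewrite lerBlDr.
  by apply: le_trans (flatten_le (x + sc a u) t0) _; rewrite addrAC hu addrAC.
apply: le_flatten => t t0; rewrite addrAC hu addrAC lerD2r.
exact: flatten_le.
Qed.

Lemma flatten_value u : linear_along q u -> flatten q v u = q u.
Proof.
move=> hu; have := flatten_shift hu 0 1.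
by rewrite add0r sc1 flatten0 add0r mul1r => ->.
Qed.

Lemma flatten_keeps_along u : linear_along q u -> linear_along (flatten q v) u.
Proof. by move=> hu x a; rewrite (flatten_shift hu) (flatten_value hu). Qed.

End Flatten.

Fixpoint flatten_seq (p : V -> R) (l : seq V) : V -> R :=
  if l is v :: l' then flatten (flatten_seq p l') v else p.

Section FlattenSeq.
Variable p : V -> R.
Hypothesis hp : sublinear p.

Lemma flatten_seq_sublinear l : sublinear (flatten_seq p l).
Proof. by elim: l => //= v l IH; apply: flatten_sublinear. Qed.

Lemma flatten_seq_le l x : flatten_seq p l x <= p x.
Proof.
elim: l x => //= v l IH x; apply: le_trans (IH x).
exact/flatten_le_self/flatten_seq_sublinear.
Qed.

Lemma flatten_seq_along l u : u \in l -> linear_along (flatten_seq p l) u.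
Proof.
elim: l => //= v l IH; rewrite inE => /orP [/eqP ->|ul].
  exact/flatten_linear_along/flatten_seq_sublinear.
exact/flatten_keeps_along/IH/ul/flatten_seq_sublinear.
Qed.

(* The value at the last flattened vector [x0] is preserved by the later
   flattenings, since they act along directions where the functional is
   already linear. *)
Lemma flatten_seq_last l x0 : flatten_seq p (l ++ [:: x0]) x0 = p x0.
Proof.
elim: l => /= [|v l IH]; first exact: flatten_self.
have along_x0 : linear_along (flatten_seq p (l ++ [:: x0])) x0.
  by apply: flatten_seq_along; rewrite mem_cat mem_seq1 eqxx orbT.
by rewrite (flatten_value _ (flatten_seq_sublinear _) along_x0).
Qed.

End FlattenSeq.

Lemma linear_along_sum (q : V -> R) (c : R * V -> R) (r : seq (R * V)) :
  (forall pr, pr \in r -> linear_along q pr.2) -> forall x,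
  q (x + \sum_(pr <- r) sc (c pr) pr.2) = q x + \sum_(pr <- r) c pr * q pr.2.
Proof.
elim: r => [|pr r IH] H x; first by rewrite !big_nil !addr0.
rewrite !big_cons addrCA addrC H ?inE ?eqxx // IH; last first.
  by move=> pr' h; apply: H; rewrite inE h orbT.
by rewrite -addrA [X in _ + X]addrC.
Qed.

Definition real_span (l : seq V) (y : V) : Prop :=
  exists r : seq (R * V), (forall pr, pr \in r -> pr.2 \in l) /\
    y = \sum_(pr <- r) sc pr.1 pr.2.

Theorem finite_hahn_banach (p : V -> R) (l : seq V) (x0 : V) :
  sublinear p -> (forall y, real_span l y) ->
  exists q : V -> R, (forall x y, q (x + y) = q x + q y) /\
    (forall a x, q (sc a x) = a * q x) /\ (forall x, q x <= p x) /\
    q x0 = p x0.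
Proof.
move=> hp hspan; pose q := flatten_seq p (l ++ [:: x0]).
have hq : sublinear q := flatten_seq_sublinear hp _.
have along_span y : exists r : seq (R * V),
    (forall pr, pr \in r -> linear_along q pr.2) /\
    y = \sum_(pr <- r) sc pr.1 pr.2.
  have [r [hr ->]] := hspan y; exists r; split => // pr /hr ul.
  by apply: flatten_seq_along => //; rewrite mem_cat ul.
have sum_val (c : R * V -> R) r :
    (forall pr, pr \in r -> linear_along q pr.2) ->
    q (\sum_(pr <- r) sc (c pr) pr.2) = \sum_(pr <- r) c pr * q pr.2.
  move=> hr; have := linear_along_sum c hr 0.
  by rewrite add0r (sublinear0 hq) add0r.
exists q; split; last split; last split.
- move=> x y; have [r [hr ->]] := along_span y.
  by rewrite (linear_along_sum (fun pr => pr.1)) // sum_val.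
- move=> a x; have [r [hr ->]] := along_span x.
  rewrite sc_sum (sum_val (fun pr => a * pr.1)) // sum_val // mulr_sumr.
  by apply: eq_bigr => pr _; rewrite mulrA.
- exact: flatten_seq_le.
- exact: flatten_seq_last.
Qed.

End FiniteHahnBanach.

Local Open Scope complex_scope.

Section ConcreteScalars.
Variable R : realType.

Lemma unit_sup_real : unit_sup_property R.
Proof.
move=> S [a Sa] hb; exists (sup S); split.
  move=> b Sb; apply: sup_upper_bound => //; split; first by exists a.
  by exists 1 => y /hb /andP [].
by move=> c hc; apply: ge_sup; first by exists a.
Qed.

(* A set of nonnegative complex numbers lies on the real axis, so its
   supremum is that of the set of real parts. *)
Lemma unit_sup_complex : unit_sup_property R[i].
Proof.
move=> S [a Sa] hb; pose S' := [set complex.Re b | b in S].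
have hS' : has_sup S'.
  split; first by exists (complex.Re a), a.
  exists 1 => _ [b Sb <-]; have /andP [_] := hb b Sb.
  by rewrite lecE => /andP [].
exists (sup S')%:C; split.
  move=> b Sb; rewrite lecE; apply/andP; split.
    by have /andP [b0 _] := hb b Sb; rewrite (ger0_Im b0).
  by apply: sup_upper_bound => //; exists b.
move=> c hc; have := hc a Sa; rewrite lecE => /andP [/eqP ca _].
have /andP [a0 _] := hb a Sa.
rewrite lecE; apply/andP; split; first by rewrite ca (ger0_Im a0).
apply: ge_sup; first by exists (complex.Re a), a.
by move=> _ [b Sb <-]; have := hc b Sb; rewrite lecE => /andP [].
Qed.

(* Finite-dimensional real normed spaces: Hahn-Banach applied to the norm
   gives a norming functional at every unit vector. *)
Lemma norming_real (X : normedModType R) :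
  finite_dim X -> forall z : X, `|z| = 1 -> exists g, Pi z g.
Proof.
move=> [s hs] z nz.
have norm_sub : sublinear (fun (a : R) (x : X) => a *: x) (fun x : X => `|x|).
  split; first exact: ler_normD.
  by move=> r x r0; rewrite normrZ ger0_norm.
have span y : real_span (fun (a : R) (x : X) => a *: x) s y.
  have [c ->] := hs y; exists [seq (c i, s`_i) | i <- index_enum 'I_(size s)].
  split; last by rewrite big_map.
  by move=> pr /mapP [i _ ->]; apply: mem_nth.
have [q [qD [qZ [qle qz]]]] := finite_hahn_banach (@scalerDr _ _)
  (fun a b x => scalerDl x a b) (@scalerA _ _) (@scale1r _ _) z norm_sub span.
exists q; apply: Pi_of_norming => //.
- by move=> a x y; rewrite qD qZ.
- move=> x; rewrite ler_norml qle andbT.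
  by have := qle (- x); rewrite normrN -scaleN1r qZ mulN1r lerNl.
- by rewrite qz nz.
Qed.

Section ComplexSpace.
Variable X : normedModType R[i].

Definition rscale (a : R) (x : X) : X := a%:C *: x.

Lemma rscaleDr a x y : rscale a (x + y) = rscale a x + rscale a y.
Proof. exact: scalerDr. Qed.
Lemma rscaleDl a b x : rscale (a + b) x = rscale a x + rscale b x.
Proof. by rewrite /rscale rmorphD scalerDl. Qed.
Lemma rscaleA a b x : rscale a (rscale b x) = rscale (a * b) x.
Proof. by rewrite /rscale scalerA rmorphM. Qed.
Lemma rscale1 x : rscale 1 x = x.
Proof. by rewrite /rscale rmorph1 scale1r. Qed.

Lemma scale_rscale (a : R[i]) (x : X) :
  a *: x = rscale (complex.Re a) x + rscale (complex.Im a) ('i *: x).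
Proof. by rewrite /rscale scalerA -scalerDl mulrC -complexE. Qed.

Lemma real_span_of_span (s : seq X) : (forall y, in_span s y) ->
  forall y, real_span rscale (s ++ [seq 'i *: v | v <- s]) y.
Proof.
move=> hs y; have [c ->] := hs y.
exists ([seq (complex.Re (c i), s`_i) | i <- index_enum 'I_(size s)] ++
        [seq (complex.Im (c i), 'i *: s`_i) | i <- index_enum 'I_(size s)]).
split.
  move=> pr; rewrite !mem_cat => /orP [] /mapP [i _ ->] /=.
    by rewrite mem_nth.
  by rewrite map_f ?orbT // mem_nth.
rewrite big_cat !big_map /= -big_split /=.
by apply: eq_bigr => i _; rewrite scale_rscale.
Qed.

(* The complex-linear functional whose real part is a given real-linear
   functional [q]. *)
Definition complexify (q : X -> R) (x : X) : R[i] := (q x) +i* (- q ('i *: x)).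

Variable q : X -> R.
Hypothesis qD : forall x y, q (x + y) = q x + q y.
Hypothesis qZ : forall a x, q (rscale a x) = a * q x.

Lemma complexify_linear : is_linear_fun (complexify q).
Proof.
have qN x : q (- x) = - q x.
  have -> : - x = rscale (-1) x by rewrite /rscale rmorphN rmorph1 scaleN1r.
  by rewrite qZ mulN1r.
have ii x : 'i *: ('i *: x) = - x.
  by rewrite scalerA -expr2 sqrCi scaleN1r.
move=> a x y; rewrite /complexify scalerDr !qD (scale_rscale a x).
rewrite scalerDr /rscale !scalerA !(mulrC 'i) -!scalerA -!/(rscale _ _).
rewrite !qD !qZ ii qN; case: a => a1 a2.
by apply/eqP; rewrite eq_complex /=; apply/andP; split; apply/eqP; ring.
Qed.

(* If [q] is dominated by the norm, so is the modulus of [complexify q]: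
   rotate [x] so that the value becomes real. *)
Lemma complexify_bound : (forall x, q x <= complex.Re `|x|) ->
  forall x, `|complexify q x| <= `|x|.
Proof.
move=> qle x; have [->|w0] := eqVneq (complexify q x) 0.
  by rewrite normr0.
have lq := complexify_linear.
set w := complexify q x in w0 *; have [lam [nlam lamw]] := unit_rotation w0.
have rot : complexify q (lam *: x) = `|w| by rewrite (linfZ lq) lamw.
rewrite lecE; apply/andP; split.
  by rewrite (ger0_Im (normr_ge0 _)) (ger0_Im (normr_ge0 _)).
rewrite -rot /=; apply: le_trans (qle _) _.
by rewrite normrZ nlam mul1r.
Qed.

End ComplexSpace.

Lemma ReD (a b : R[i]) : complex.Re (a + b) = complex.Re a + complex.Re b.
Proof. by case: a; case: b. Qed.

Lemma ReM (r : R) (w : R[i]) : complex.Re (r%:C * w) = r * complex.Re w.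
Proof. by case: w => a b; rewrite /= mul0r subr0. Qed.

Lemma complex_eq1 (w : R[i]) : complex.Re w = 1 -> `|w| <= 1 -> w = 1.
Proof.
move=> re1 w1; have : `|w| ^+ 2 <= 1.
  by rewrite -(expr1n _ 2) lerXn2r // ?nnegrE ?normr_ge0 ?ler01.
rewrite -add_Re2_Im2 re1 expr1n (_ : (1 : R[i]) = (1 : R)%:C) // lecR gerDl.
move=> im0; have : complex.Im w = 0.
  by apply/eqP; rewrite -sqrf_eq0 eq_le im0 sqr_ge0.
by case: w re1 {w1 im0} => a b /= -> ->.
Qed.

(* Finite-dimensional complex normed spaces: real Hahn-Banach for the real
   part of the norm, then complexification. *)
Lemma norming_complex (X : normedModType R[i]) :
  finite_dim X -> forall z : X, `|z| = 1 -> exists g, Pi z g.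
Proof.
move=> [s hs] z nz.
pose p := fun x : X => complex.Re `|x|.
have p_sub : sublinear (@rscale X) p.
  split.
    move=> x y; have := ler_normD x y; rewrite lecE ReD => /andP [_ h].
    exact: h.
  by move=> r x r0; rewrite /p /rscale normrZ ger0_norm ?ler0c // ReM.
have [q [qD [qZ [qle qz]]]] := finite_hahn_banach (@rscaleDr X) (@rscaleDl X)
  (@rscaleA X) (@rscale1 X) z p_sub (real_span_of_span hs).
have bg := complexify_bound qD qZ qle.
exists (complexify q); apply: (Pi_of_norming (complexify_linear qD qZ) bg nz).
by apply: complex_eq1; [rewrite /= qz /p nz | rewrite -nz bg].
Qed.

End ConcreteScalars.

Theorem theorem2p4 (R : realType) :
  (forall X : completeNormedModType R, theorem2p4_stmt X) /\
  (forall X : completeNormedModType R[i], theorem2p4_stmt X).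
Proof.
split=> X.
- exact: BPBop_nu_iff_one_dim (@unit_sup_real R) (@norming_real R X).
- exact: BPBop_nu_iff_one_dim (@unit_sup_complex R) (@norming_complex R X).
Qed.
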